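(* Let $X$ be a Hausdorff compactum, $G$ an abelian group, and $n\in\mathcal H_{X,G}$. Then there exist closed sets $F\subset K\subset X$ such that $K$ is an $(n-1)$-homology membrane spanned on $F$ for some nontrivial element of $H_{n-1}(F;G)$.
   Context: $H_k(\cdot;G)$ is reduced Čech homology; $i^k_{A,K}$ denotes the inclusion-induced homomorphism. $\mathcal H_{X,G}$ is the set of integers $k\ge1$ such that there exist a closed $F\subset X$ and a nontrivial $\gamma\in H_{k-1}(F;G)$ with $i^{k-1}_{F,X}(\gamma)=0$. For closed $B\subset K$, $K$ is an $(n-1)$-homology membrane spanned on $B$ for $\gamma\in H_{n-1}(B;G)$ if $i^{n-1}_{B,K}(\gamma)=0$ but $i^{n-1}_{B,K'}(\gamma)\ne0$ for every proper closed subset $K'\subsetneq K$ containing $B$. *)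

From HB Require Import structures.
From mathcomp Require Import all_boot all_order all_algebra.
From mathcomp Require Import boolp classical_sets topology.
Set Implicit Arguments. Unset Strict Implicit. Unset Printing Implicit Defensive.
Import Order.TTheory GRing.Theory.
Local Open Scope classical_set_scope.
Local Open Scope ring_scope.

(* Reduced Čech homology H_d(A;G) of a subset A of a topological space X.   *)
(* Covers of A are finite families O : 'I_m -> set X of open sets of X      *)
(* covering A; their traces O i ∩ A are exactly the (finite) open covers of *)
(* A in the subspace topology, and finite covers are cofinal since all sets *)
(* considered are compact.  The nerve N_A(O) has as simplices the vertex     *)
(* sequences whose sets have a common point in A.  We use the ordered chain *)
(* complex (d-chains = G-valued functions on (d+1)-tuples of vertices        *)
(* supported on the nerve), augmented in degree 0 (reduced homology).        *)
(* An element of the inverse limit lim_O H_d(N_A(O);G) is represented by a  *)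
(* family of reduced cycles gamma_O, one for each cover O, which is         *)
(* compatible up to boundaries along every refinement projection.           *)

Section Cech.
Variables (X : topologicalType) (G : zmodType).

Definition chain (m d : nat) := {ffun d.+1.-tuple 'I_m -> G}.

Definition nerve (A : set X) m (O : 'I_m -> set X) (s : seq 'I_m) : Prop :=
  (A `&` \bigcap_(i in [set i | i \in s]) O i) !=set0.

Definition supported (A : set X) m (O : 'I_m -> set X) d (c : chain m d) : Prop :=
  forall s : d.+1.-tuple 'I_m, ~ nerve A O (val s) -> c s = 0.

Definition is_cover (A : set X) m (O : 'I_m -> set X) : Prop :=
  (forall i, open (O i)) /\ A `<=` \bigcup_i O i.

Definition refines (A : set X) m' (V : 'I_m' -> set X) m (O : 'I_m -> set X)
  (p : 'I_m' -> 'I_m) : Prop :=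
  forall j, V j `&` A `<=` O (p j).

(* ordered simplicial boundary: d (v_0..v_{d+1}) = sum_j (-1)^j (.. v_j omitted ..) *)
Definition bd m d (c : chain m d.+1) : chain m d :=
  [ffun t : d.+1.-tuple 'I_m =>
     \sum_(s : d.+2.-tuple 'I_m) \sum_(j < d.+2)
        (if take j (val s) ++ drop j.+1 (val s) == val t
         then (if odd j then - c s else c s) else 0)].

Definition aug m (c : chain m 0) : G := \sum_s c s.

Definition is_rcycle m d : chain m d -> Prop :=
  match d with
  | 0 => fun c => aug c = 0
  | d'.+1 => fun c => bd c = 0
  end.

Definition is_bdry (A : set X) m (O : 'I_m -> set X) d (c : chain m d) : Prop :=
  exists b : chain m d.+1, supported A O b /\ bd b = c.

Definition push m' m (p : 'I_m' -> 'I_m) d (c : chain m' d) : chain m d :=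
  [ffun t : d.+1.-tuple 'I_m => \sum_(s | map p (val s) == val t) c s].

Definition cech_fam (d : nat) := forall m : nat, ('I_m -> set X) -> chain m d.

Definition cech_elt (A : set X) d (gamma : cech_fam d) : Prop :=
  (forall m (O : 'I_m -> set X), is_cover A O ->
      supported A O (gamma m O) /\ is_rcycle (gamma m O)) /\
  (forall m (O : 'I_m -> set X) m' (V : 'I_m' -> set X) (p : 'I_m' -> 'I_m),
      is_cover A O -> is_cover A V -> refines A V O p ->
      is_bdry A O (push p (gamma m' V) - gamma m O)).

Definition cech_zero (A : set X) d (gamma : cech_fam d) : Prop :=
  forall m (O : 'I_m -> set X), is_cover A O -> is_bdry A O (gamma m O).

(* For B ⊆ K, the inclusion-induced map i^d_{B,K} sends the class of gamma
   to the class whose component at a cover O of K (which is also a cover of B,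
   with N_B(O) a subcomplex of N_K(O)) is gamma_O itself.  Hence
   i^d_{B,K}(gamma) = 0  iff  cech_zero K gamma. *)
Definition incl_zero (B K : set X) d (gamma : cech_fam d) : Prop :=
  B `<=` K /\ cech_zero K gamma.

Definition in_H (k : nat) : Prop :=
  (1 <= k)%N /\
  exists (F : set X) (gamma : cech_fam k.-1),
    closed F /\ cech_elt F gamma /\ ~ cech_zero F gamma /\
    incl_zero F [set: X] gamma.

Definition homology_membrane (n : nat) (B K : set X) (gamma : cech_fam n.-1)
  : Prop :=
  closed B /\ closed K /\ B `<=` K /\
  incl_zero B K gamma /\
  (forall K' : set X, closed K' -> B `<=` K' -> K' `<=` K -> K' <> K ->
     ~ incl_zero B K' gamma).

End Cech.

(* The open sets U disjoint from F such that gamma vanishes on X `\` U are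
   closed under unions of chains: by compactness, a cover of the intersection
   of a decreasing family of compacta already serves some member of the
   family, which is the continuity of Čech homology.  The empty union belongs
   to the family because gamma dies in X.  Zorn's lemma gives a maximal such
   U, and K := X `\` U is a membrane: a proper closed K' between F and K on
   which gamma vanishes would make X `\` K' a larger member of the family. *)

From HB Require Import structures.
From mathcomp Require Import all_boot all_order all_algebra.
From mathcomp Require Import boolp classical_sets cardinality topology.
Set Implicit Arguments.
Unset Strict Implicit.
Unset Printing Implicit Defensive.
Import GRing.Theory.
Local Open Scope classical_set_scope.
Local Open Scope ring_scope.

Section ChainAlgebra.
Variable G : zmodType.

Lemma sum_tuple_val_eq (T : finType) k (L : seq T) (g : seq T -> G) :
  \sum_(w : k.-tuple T) (if val w == L then g (val w) else 0) =
  if size L == k then g L else 0.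
Proof.
case: eqP => [sizeL|sizeL].
  have /eqP sizeL' := sizeL.
  rewrite (bigD1 (Tuple sizeL')) //= eqxx big1 ?addr0 // => w neq_w.
  by case: eqP => // wL; case/eqP: neq_w; apply: val_inj.
rewrite big1 // => w _; case: eqP => // wL.
by case: sizeL; rewrite -wL size_tuple.
Qed.

Lemma bdB m d (a b : chain G m d.+1) : bd (a - b) = bd a - bd b.
Proof.
apply/ffunP => t; rewrite !ffunE -sumrB; apply: eq_bigr => s _.
rewrite -sumrB; apply: eq_bigr => j _; rewrite !ffunE.
by case: ifP => _; [case: ifP => _; rewrite ?opprD ?opprK | rewrite subr0].
Qed.

Let alt_sign (j : nat) (x : G) := if odd j then - x else x.

Let face {T : Type} j (s : seq T) := take j s ++ drop j.+1 s.

Lemma size_face {T : Type} d (s : d.+2.-tuple T) (j : 'I_d.+2) :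
  size (face j (val s)) = d.+1.
Proof.
by rewrite size_cat size_take size_drop size_tuple ltn_ord subSS subnKC // -ltnS.
Qed.

Section Push.
Variables (m' m : nat) (p : 'I_m' -> 'I_m) (d : nat) (c : chain G m' d.+1).

Let push_bdE t : push p (bd c) t = \sum_(u : d.+2.-tuple 'I_m') \sum_(j < d.+2)
   (if map p (face j (val u)) == val t then alt_sign j (c u) else 0).
Proof.
rewrite ffunE big_mkcond /=.
under eq_bigr => w _ do rewrite ffunE.
transitivity (\sum_(w : d.+1.-tuple 'I_m') \sum_(u : d.+2.-tuple 'I_m')
  \sum_(j < d.+2) (if val w == face j (val u) then
     (if map p (val w) == val t then alt_sign j (c u) else 0) else 0)).
  apply: eq_bigr => w _; case: ifP => wt.
    apply: eq_bigr => u _; apply: eq_bigr => j _.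
    by rewrite (eq_sym (val w)); case: ifP.
  by rewrite big1 // => u _; rewrite big1 // => j _; case: ifP.
rewrite exchange_big; apply: eq_bigr => u _.
rewrite exchange_big; apply: eq_bigr => j _.
by rewrite (sum_tuple_val_eq _ _ (fun L => if map p L == val t
  then alt_sign j (c u) else 0)) size_face eqxx.
Qed.

Let bd_pushE t : bd (push p c) t = \sum_(u : d.+2.-tuple 'I_m') \sum_(j < d.+2)
   (if face j (map p (val u)) == val t then alt_sign j (c u) else 0).
Proof.
rewrite ffunE.
transitivity (\sum_(s : d.+2.-tuple 'I_m) \sum_(j < d.+2)
   \sum_(u : d.+2.-tuple 'I_m')
   (if val s == map p (val u) then
     (if face j (val s) == val t then alt_sign j (c u) else 0) else 0)).
  apply: eq_bigr => s _; apply: eq_bigr => j _; rewrite ffunE.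
  under [RHS]eq_bigr => u _ do rewrite eq_sym.
  rewrite /alt_sign; case: ifP => _; last by rewrite big1 // => u _; case: ifP.
  rewrite big_mkcond /=; case: (odd j) => //.
  by rewrite -sumrN; apply: eq_bigr => u _; case: ifP; rewrite ?oppr0.
under eq_bigr => s _ do rewrite exchange_big.
rewrite exchange_big; apply: eq_bigr => u _.
rewrite exchange_big; apply: eq_bigr => j _.
by rewrite (sum_tuple_val_eq _ _ (fun L => if face j L == val t
  then alt_sign j (c u) else 0)) size_map size_tuple eqxx.
Qed.

Lemma push_bd : push p (bd c) = bd (push p c).
Proof.
apply/ffunP => t; rewrite push_bdE bd_pushE.
by apply: eq_bigr => u _; apply: eq_bigr => j _; rewrite /face map_cat map_take map_drop.
Qed.

End Push.
End ChainAlgebra.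

Section CechVanishing.
Variables (X : topologicalType) (G : zmodType).

Lemma nerveS (A B : set X) m (O : 'I_m -> set X) (s : seq 'I_m) :
  A `<=` B -> nerve A O s -> nerve B O s.
Proof. by move=> AB [x [Ax Ox]]; exists x; split => //; exact: AB. Qed.

Lemma is_coverS (A B : set X) m (O : 'I_m -> set X) :
  A `<=` B -> is_cover B O -> is_cover A O.
Proof. by move=> AB [oO BO]; split => // x /AB /BO. Qed.

Lemma refines_nerve_map (A : set X) m' (V : 'I_m' -> set X) m
    (O : 'I_m -> set X) (p : 'I_m' -> 'I_m) (s : seq 'I_m') :
  refines A V O p -> nerve A V s -> nerve A O (map p s).
Proof.
move=> VO [x [Ax Vx]]; exists x; split => // _ /= /mapP [j js ->].
by apply: VO; split => //; exact: Vx.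
Qed.

(* The closed sets spanned by the closures of the finitely many vertex sets
   that are not simplices on K, together with the complement of the cover,
   form a closed set missing K; W is its complement. *)
Lemma nerve_closure_nbhd (K : set X) k (V : 'I_k -> set X) :
  is_cover K V ->
  exists2 W, [/\ open W, K `<=` W & W `<=` \bigcup_j V j] &
    forall s, nerve W V s -> nerve K (fun j => closure (V j)) s.
Proof.
move=> [oV KV].
pose clV j := closure (V j).
pose bad := [set S : {set 'I_k} | ~ nerve K clV (enum S)].
pose Z := ~` (\bigcup_j V j) `|`
  \bigcup_(S in bad) \bigcap_(j in [set j | j \in enum S]) clV j.
have cZ : closed Z.
  apply: closedU; first by apply: open_closedC; apply: bigcup_open => j _.
  apply: closed_bigcup; first exact: finite_finset.
  by move=> S _; apply: closed_bigI => j _; exact: closed_closure.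
exists (~` Z); first split.
- exact: closed_openC.
- move=> x Kx [nVx|[S badS clVx]]; first exact: nVx (KV x Kx).
  by apply: badS; exists x.
- by move=> x Zx; apply: contrapT => nVx; apply: Zx; left.
move=> s [x [Zx Vx]]; apply: contrapT => bad_s; apply: Zx; right.
pose S := finset (fun j => j \in s).
have sS : [set j | j \in enum S] = [set j | j \in s].
  by apply/seteqP; split => j; rewrite /= mem_enum finset.in_set.
exists S; first by rewrite /bad /= /nerve sS.
by rewrite sS => j sj; apply: subset_closure; exact: Vx.
Qed.

Lemma supportedS (A B : set X) m (O : 'I_m -> set X) d (c : chain G m d) :
  A `<=` B -> supported A O c -> supported B O c.
Proof. by move=> AB c_supp s /(contra_not (nerveS AB)); exact: c_supp. Qed.

Lemma supportedB (A : set X) m (O : 'I_m -> set X) d (a b : chain G m d) :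
  supported A O a -> supported A O b -> supported A O (a - b).
Proof. by move=> a_supp b_supp s ns; rewrite !ffunE a_supp // b_supp // subr0. Qed.

Lemma supported_push (A B : set X) m' (V : 'I_m' -> set X) m
    (O : 'I_m -> set X) (p : 'I_m' -> 'I_m) d (c : chain G m' d) :
  (forall s, nerve A V s -> nerve B O (map p s)) ->
  supported A V c -> supported B O (push p c).
Proof.
move=> nerve_map c_supp t nt; rewrite ffunE big1 // => s /eqP st.
by apply: c_supp => /nerve_map; rewrite st.
Qed.

Definition vanishing_open (F : set X) d (gamma : cech_fam X G d) (U : set X) :=
  [/\ open U, F `<=` ~` U & cech_zero (~` U) gamma].

Section CompactSpace.
Hypothesis cptX : compact [set: X].

(* If no ~` U lies in W, the closed sets ~` U `&` ~` W form a filter base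
   (Fam is directed), and a cluster point of it contradicts the hypothesis. *)
Lemma directed_bigcupC_sub_open (Fam : set (set X)) (W : set X) :
  Fam !=set0 ->
  (forall U1 U2, Fam U1 -> Fam U2 -> exists2 U3, Fam U3 & U1 `|` U2 `<=` U3) ->
  (forall U, Fam U -> open U) -> open W ->
  ~` (\bigcup_(U in Fam) U) `<=` W -> exists2 U, Fam U & ~` U `<=` W.
Proof.
move=> [U0 FamU0] directed oFam oW sub; apply: contrapT => noU.
pose B (U : set X) := ~` U `&` ~` W.
have B_neq0 U : Fam U -> B U !=set0.
  move=> FamU; apply: contrapT => nBU; apply: noU; exists U => // x nUx.
  by apply: contrapT => nWx; apply: nBU; exists x.
have BFilter : ProperFilter (filter_from Fam B).
  apply: filter_from_proper; last exact: B_neq0.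
  apply: filter_from_filter; first by exists U0.
  move=> U1 U2 FamU1 FamU2; have [U3 FamU3 sU3] := directed _ _ FamU1 FamU2.
  by exists U3 => // x [nU3x nWx]; split; split => // ?; apply: nU3x; apply: sU3;
    [left|right].
have [p [_ clp]] := cptX BFilter filterT.
have Bp U : Fam U -> B U p.
  move=> FamU; rewrite clusterE in clp.
  have cB : closed (B U) by apply: closedI; apply: open_closedC => //; exact: oFam.
  by rewrite (closure_id (B U)).1 //; apply: clp; exists U.
apply: (Bp U0 FamU0).2; apply: sub => -[U FamU Up].
by have [] := Bp U FamU.
Qed.

Lemma chain_bigcupC_sub_open (Fam : set (set X)) (W : set X) :
  Fam !=set0 -> total_on Fam subset ->
  (forall U, Fam U -> open U) -> open W ->
  ~` (\bigcup_(U in Fam) U) `<=` W -> exists2 U, Fam U & ~` U `<=` W.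
Proof.
move=> Fam_neq0 tot; apply: directed_bigcupC_sub_open => // U1 U2 FamU1 FamU2.
have [s12|s21] := tot _ _ FamU1 FamU2.
  by exists U2 => // x [/s12|].
by exists U1 => // x [|/s21].
Qed.

Hypothesis hausX : hausdorff_space X.

Lemma open_nbhs_closure_sub (O : set X) (x : X) :
  open O -> O x -> exists W, [/\ open W, W x & closure W `<=` O].
Proof.
move=> oO Ox.
have /(compact_regular hausX cptX filterT) [N Nx clNO] : nbhs x O.
  exact: open_nbhs_nbhs.
exists (interior N); split; [exact: open_interior | exact: Nx |].
by apply: subset_trans clNO; apply: closureS; exact: interior_subset.
Qed.

Lemma shrink_cover (K : set X) m (O : 'I_m -> set X) :
  closed K -> is_cover K O ->
  exists k (V : 'I_k -> set X) (p : 'I_k -> 'I_m),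
    is_cover K V /\ forall j, closure (V j) `<=` O (p j).
Proof.
move=> cK [oO KO].
(* Finite unions of shrunken neighbourhoods form a directed open family
   covering K, so by compactness one of them covers K. *)
have shrink (y : {x | K x}) : exists q : 'I_m * set X,
    [/\ open q.2, q.2 (sval y) & closure q.2 `<=` O q.1].
  case: y => x Kx /=; have [i _ Oix] := KO x Kx.
  have [W [oW Wx clWO]] := open_nbhs_closure_sub (oO i) Oix.
  by exists (i, W).
have [f fP] := choice shrink.
pose unions := [set U : set X | exists k (h : 'I_k -> {x | K x}),
  U = \bigcup_j (f (h j)).2].
have [U [k [h ->]] KU] : exists2 U, unions U & ~` U `<=` ~` K.
  apply: directed_bigcupC_sub_open => //.
  - have h0 : 'I_0 -> {x | K x} by case.
    by exists (\bigcup_j (f (h0 j)).2), 0%N, h0.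
  - move=> _ _ [k1 [h1 ->]] [k2 [h2 ->]].
    pose h12 (j : 'I_(k1 + k2)) :=
      match split j with inl a => h1 a | inr b => h2 b end.
    exists (\bigcup_j (f (h12 j)).2); first by exists (k1 + k2)%N, h12.
    move=> x [[a _ ax]|[b _ bx]].
      by exists (unsplit (inl a)) => //; rewrite /h12 unsplitK.
    by exists (unsplit (inr b)) => //; rewrite /h12 unsplitK.
  - by move=> _ [k [h ->]]; apply: bigcup_open => j _; have [] := fP (h j).
  - exact: closed_openC.
  - move=> x nx Kx; apply: nx; pose y : {x | K x} := exist _ x Kx.
    exists (\bigcup_(j : 'I_1) (f y).2); first by exists 1%N, (fun=> y).
    by exists ord0 => //; have [] := fP y.
exists k, (fun j => (f (h j)).2), (fun j => (f (h j)).1).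
split; last by move=> j; have [] := fP (h j).
split; first by move=> j; have [] := fP (h j).
by move=> x Kx; apply: contrapT => nUx; exact: KU x nUx Kx.
Qed.

(* A cover O of K has a shrinking V whose nerve on a neighbourhood of K is
   that of the closures on K; V then covers some ~` U of the chain, where
   gamma bounds.  Pushing that bounding chain to O and correcting it by the
   compatibility of gamma on F along V -> O bounds gamma on O. *)
Lemma cech_zero_chain_bigcap (F : set X) d (gamma : cech_fam X G d)
    (Fam : set (set X)) :
  cech_elt F gamma -> Fam !=set0 -> total_on Fam subset ->
  Fam `<=` vanishing_open F gamma -> cech_zero (~` \bigcup_(U in Fam) U) gamma.
Proof.
move=> [_ gamma_compat] Fam_neq0 tot vanFam m O coverO.
set K := ~` _.
have FK : F `<=` K.
  by move=> x Fx [U /vanFam [_ FU _] Ux]; exact: FU x Fx Ux.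
have oFam U : Fam U -> open U by move=> /vanFam [].
have cK : closed K by apply: open_closedC; exact: bigcup_open.
have [k [V [p [coverV clVO]]]] := shrink_cover cK coverO.
have [W [oW KW WV] nerveW] := nerve_closure_nbhd coverV.
have [U FamU UW] := chain_bigcupC_sub_open Fam_neq0 tot oFam oW KW.
have [_ _ gamma_zeroU] := vanFam U FamU.
have [b2 [b2_supp bd_b2]] := gamma_zeroU k V (conj coverV.1 (subset_trans UW WV)).
have VO : refines F V O p by move=> j x [Vx _]; apply: clVO; exact: subset_closure.
have [b1 [b1_supp bd_b1]] :=
  gamma_compat m O k V p (is_coverS FK coverO) (is_coverS FK coverV) VO.
exists (push p b2 - b1); split; last by rewrite bdB -push_bd bd_b2 bd_b1 subKr.
apply: supportedB; last exact: supportedS FK b1_supp.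
apply: supported_push b2_supp => s /(nerveS UW) /nerveW.
by apply: refines_nerve_map => j x [clVx _]; exact: clVO.
Qed.

Lemma vanishing_open_bigcup (F : set X) d (gamma : cech_fam X G d)
    (Fam : set (set X)) :
  cech_elt F gamma -> cech_zero [set: X] gamma ->
  Fam `<=` vanishing_open F gamma -> total_on Fam subset ->
  vanishing_open F gamma (\bigcup_(U in Fam) U).
Proof.
move=> gamma_elt gamma_zeroX vanFam tot.
have [Fam_neq0|Fam_eq0] := pselect (Fam !=set0).
  split; first by apply: bigcup_open => U /vanFam [].
    by move=> x Fx [U /vanFam [_ FU _] Ux]; exact: FU x Fx Ux.
  exact: cech_zero_chain_bigcap gamma_elt Fam_neq0 tot vanFam.
have -> : \bigcup_(U in Fam) U = set0.
  by apply/seteqP; split => // x [U FamU _]; apply: Fam_eq0; exists U.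
by split; rewrite ?setC0 //; exact: open0.
Qed.

End CompactSpace.
End CechVanishing.

Theorem corollary2p7 (X : topologicalType) (G : zmodType) (n : nat) :
  hausdorff_space X -> compact [set: X] ->
  in_H X G n ->
  exists (F K : set X) (gamma : cech_fam X G n.-1),
    closed F /\ closed K /\ F `<=` K /\
    cech_elt F gamma /\ ~ cech_zero F gamma /\
    homology_membrane F K gamma.
Proof.
move=> hausX cptX [_ [F [gamma [cF [gamma_elt [gamma_neq0 [_ gamma_zeroX]]]]]]].
have [A [[oA FA gamma_zeroA] maxA]] := Zorn_bigcup (fun Fam vanFam tot =>
  vanishing_open_bigcup cptX hausX gamma_elt gamma_zeroX vanFam tot).
have minimal K' : closed K' -> F `<=` K' -> K' `<=` ~` A -> K' <> ~` A ->
    ~ incl_zero F K' gamma.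
  move=> cK' FK' K'A K'_neq [_ gamma_zeroK'].
  apply: (maxA (~` K')); last by split; rewrite ?setCK //; exact: closed_openC.
  split; first by move=> x Ax K'x; exact: K'A x K'x Ax.
  move=> AK'; apply: K'_neq; apply/seteqP; split => // x nAx.
  by apply: contrapT => /AK'.
have cK : closed (~` A) by exact: open_closedC.
by exists F, (~` A), gamma; do 5!split => //; do 4!split.
Qed.
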